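(* Let $X$ satisfy assumptions (A) described in the context, and let $\nu$, $a_1$ be as there. Then for every $r>0$, $$\left|\frac{\nu'(r)}{\nu(r)}\right|\le\frac{3(a_1-1)}{r\wedge1}.$$ Moreover, for $0<r_1<r_2<\infty$, $$\frac{\nu(r_1)}{\nu(r_2)}\le\left(\frac{r_2}{r_1}\right)^{3(a_1-1)}e^{3(a_1-1)(r_2-r_1)}$$ and $$\nu(r_1)-\nu(r_2)\le\frac32(a_1-1)\,\frac{\nu(r_1)}{1\wedge r_1}\,(r_2-r_1)\left(1+\frac{r_2}{r_1}\right).$$
   Context: Assumptions (A): (H0) $X$ is a pure-jump isotropic Lévy process in $\mathbb{R}^d$ with characteristic exponent $\psi$, whose Lévy measure is infinite with density $\nu(x)=\nu(|x|)$. (H1) $\nu(r)$ is nonincreasing and absolutely continuous on $(0,\infty)$, $-\nu'(r)/r$ is nonincreasing on $(0,\infty)$ (where $\nu'$ is the version, defined at every $r>0$, of the function with $\nu(r)=-\int_r^\infty\nu'(\rho)d\rho$), and there is $a_1$ with $\nu(r)\le a_1\nu(r+1)$ for $r\ge1$ and $\nu(r)\le a_1\nu(2r)$ for $0<r\le1$. (H2) There is $a_2$ such that for every $x_0$, $r\in(0,1]$ and every $h\ge0$ on $\mathbb{R}^d$ harmonic in $B(x_0,r)$, $\sup_{B(x_0,r/2)}h\le a_2\inf_{B(x_0,r/2)}h$ (a Borel $f$ is harmonic in open $D$ if $f(x)=E^xf(X_{\tau_B})$, absolutely convergent, for $x\in B$, for all bounded open $B$ with $\overline B\subset D$, $\tau_B=\inf\{t>0:X_t\notin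 B\}$). *)

From HB Require Import structures.
From mathcomp Require Import all_boot all_order all_algebra.
From mathcomp Require Import all_classical all_reals all_analysis.
Set Implicit Arguments. Unset Strict Implicit. Unset Printing Implicit Defensive.
Import Order.TTheory GRing.Theory Num.Theory.
Import numFieldNormedType.Exports.
Local Open Scope classical_set_scope.
Local Open Scope ring_scope.

(* (H0), part relevant to nu: x |-> nu(|x|) is the density on R^d (d >= 1)
   of an infinite Levy measure.  Written in polar coordinates:
   int_{R^d} g(|x|) dx = c_d int_0^oo g(r) r^(d-1) dr with c_d in (0,oo). *)
Definition infinite_levy_radial_density {R : realType} (d : nat) (nu : R -> R) :=
  [/\ (0 < d)%N,
      (forall r, 0 < r -> 0 <= nu r),
      measurable_fun (`]0%R, +oo[ : set R) nu,
      (\int[lebesgue_measure]_(r in (`]0%R, +oo[ : set R)) (Num.min 1 (r ^+ 2) * nu r * r ^+ d.-1)%:E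
          < +oo)%E &
      (\int[lebesgue_measure]_(r in (`]0%R, +oo[ : set R)) (nu r * r ^+ d.-1)%:E = +oo)%E].

Definition H1 {R : realType} (nu nu' : R -> R) (a1 : R) :=
  [/\
      (forall r s, 0 < r -> r <= s -> nu s <= nu r),
      (* absolute continuity, with nu' the everywhere defined version such that
         nu(r) = - int_r^oo nu'(rho) drho *)
      (forall r, 0 < r ->
         lebesgue_measure.-integrable (`[r, +oo[ : set R) (fun rho => (nu' rho)%:E) /\
         nu r = - fine (\int[lebesgue_measure]_(rho in (`[r, +oo[ : set R)) (nu' rho)%:E)),
      (forall r s, 0 < r -> r <= s -> - nu' s / s <= - nu' r / r),
      (forall r, 1 <= r -> nu r <= a1 * nu (r + 1)) &
      (forall r, 0 < r -> r <= 1 -> nu r <= a1 * nu (2 * r))].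

(* The bound on -nu'/nu comes from the monotonicity of -nu'(x)/x: below r,
   -nu' is at least x * (-nu'(r)/r), so nu (r/2) - nu r (for r <= 2) or
   nu (r-1) - nu r (for r > 2) is at least a fixed fraction of -nu'(r) (r /\ 1);
   the doubling and shift conditions bound these differences by (a1 - 1) nu r.
   Positivity of nu follows from the same conditions: a zero of nu would
   propagate to all of (0, oo), making the Levy measure zero.
   Since nu is only absolutely continuous, the ratio bound is not obtained by
   differentiating ln nu: instead, with c = 3 (a1 - 1), the function
   ln nu x + c ln x + c x decreases by at most O((b-a)^2) on short intervals
   [a, b] (by the bound on -nu' and ln(1/(1-d)) <= d + 2 d^2), hence, by
   telescoping over fine partitions, it is nondecreasing. The last estimate is
   the integral bound nu r1 - nu r2 <= (-nu'(r1)/r1) (r2^2 - r1^2)/2. *)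

From HB Require Import structures.
From mathcomp Require Import all_boot all_order all_algebra.
From mathcomp Require Import all_classical all_reals all_analysis.
From mathcomp Require Import ring lra.
Import Order.TTheory GRing.Theory Num.Theory.
Import numFieldNormedType.Exports.
Local Open Scope classical_set_scope.
Local Open Scope ring_scope.

Section IntervalIntegrals.
Variable R : realType.
Implicit Types (a b : R) (f g : R -> R).

Lemma integral_itv_cst (C : R) a b : a < b ->
  (\int[lebesgue_measure]_(x in `[a, b]) C%:E = (C * (b - a))%:E)%E.
Proof. by move=> ab; rewrite integral_cst //= lebesgue_measure_itv /= lte_fin ab -EFinD. Qed.

Lemma integral_itv_scale_id (K : R) a b : a < b ->
  (\int[lebesgue_measure]_(x in `[a, b]) (K * x)%:E = (K * (b ^+ 2 - a ^+ 2) / 2)%:E)%E.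
Proof.
move=> ab; pose F (x : R) := K * (x ^+ 2 / 2).
have dF (x : R) : is_derive x 1 F (K * x).
  apply: is_derive_eq; rewrite !scaler0 add0r /GRing.scale /= !mulr1.
  by rewrite -mulr2n -mulr_natl; field.
have cF : continuous F.
  by move=> x; apply: differentiable_continuous; apply/derivable1_diffP; exact: ex_derive.
rewrite (@continuous_FTC2 _ _ F) //.
- by rewrite -EFinD /F -mulrBr -mulrBl mulrA.
- by apply: continuous_subspaceT => x; apply: continuousM; [exact: cvg_cst | exact: cvg_id].
- split; first by move=> x _; exact: ex_derive.
  + by apply: cvg_at_right_filter; exact: cF.
  + by apply: cvg_at_left_filter; exact: cF.
- by move=> x _; rewrite derive1E derive_val.
Qed.

Lemma integrable_itv_continuous g a b : continuous g ->
  lebesgue_measure.-integrable `[a, b] (EFin \o g).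
Proof.
move=> cg; apply: continuous_compact_integrable; first exact: segment_compact.
exact: continuous_subspaceT.
Qed.

Lemma integrable_itv_linear (K : R) a b :
  lebesgue_measure.-integrable `[a, b] (fun x => (K * x)%:E).
Proof.
by apply: integrable_itv_continuous => x; apply: continuousM; [exact: cvg_cst | exact: cvg_id].
Qed.

Lemma le_integral_itv f g a b :
  lebesgue_measure.-integrable `[a, b] (EFin \o f) ->
  lebesgue_measure.-integrable `[a, b] (EFin \o g) ->
  (forall x, a <= x <= b -> f x <= g x) ->
  (\int[lebesgue_measure]_(x in `[a, b]) (f x)%:E <=
   \int[lebesgue_measure]_(x in `[a, b]) (g x)%:E)%E.
Proof.
move=> intf intg fg; apply: le_integral => // x.
by rewrite inE /= in_itv /= => xab; rewrite lee_fin fg.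
Qed.

End IntervalIntegrals.

Lemma ln_sub_le_of_relative_drop (R : realType) (x y d : R) :
  0 < x -> 0 <= d <= 1 / 2 -> x - y <= d * x -> ln x - ln y <= d + 2 * d ^+ 2.
Proof.
move=> x0 /andP[d0 d12] xy.
have d1 : 0 < 1 - d by lra.
have y0 : 0 < y by nra.
have x_le : x <= y * (1 - d)^-1 by rewrite ler_pdivlMr //; lra.
apply: le_trans (_ : ln (1 - d)^-1 <= _).
  rewrite -ln_div ?posrE // ler_ln ?posrE ?divr_gt0 ?invr_gt0 //.
  by rewrite ler_pdivrMr // mulrC.
have -> : (1 - d)^-1 = 1 + d / (1 - d) by field; rewrite gt_eqF.
have q0 : 0 <= d / (1 - d) by rewrite divr_ge0 // ltW.
apply: le_trans (le_ln1Dx _) _; first lra.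
rewrite ler_pdivrMr //; nra.
Qed.

Lemma le_of_quadratic_drop (R : realType) (H : R -> R) (K r1 r2 eps : R) :
  r1 < r2 -> 0 < eps ->
  (forall a b, r1 <= a -> a < b -> b - a <= eps -> H a - H b <= K * (b - a) ^+ 2) ->
  H r1 <= H r2.
Proof.
move=> r12 eps0 Hdrop; set D := r2 - r1; have D0 : 0 < D by rewrite subr_gt0.
have partition (n : nat) : (0 < n)%N -> D / n%:R <= eps ->
    H r1 - H r2 <= K * D ^+ 2 / n%:R.
  move=> n0 h_eps; have n0' : 0 < (n%:R : R) by rewrite ltr0n.
  set h := D / n%:R; have h0 : 0 < h by rewrite divr_gt0.
  pose x (k : nat) := r1 + k%:R * h.
  have -> : H r1 - H r2 = \sum_(0 <= k < n) (- H (x k.+1) - - H (x k)).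
    have nh : n%:R * h = D by rewrite /h mulrC divfK ?gt_eqF.
    rewrite telescope_sumr // /x mul0r addr0 nh /D subrKC.
    by rewrite opprK addrC.
  have step k : - H (x k.+1) - - H (x k) <= K * h ^+ 2.
    have xS : x k.+1 - x k = h by rewrite /x -natr1; ring.
    rewrite opprK addrC -xS; apply: Hdrop; rewrite ?xS //.
    - by rewrite /x lerDl mulr_ge0 // ltW.
    - by rewrite -subr_gt0 xS.
  rewrite (_ : K * D ^+ 2 / n%:R = \sum_(0 <= k < n) K * h ^+ 2).
    by apply: ler_sum => k _; exact: step.
  by rewrite sumr_const_nat subn0 -mulr_natr /h; field; rewrite lt0r_neq0.
rewrite -subr_ge0 leNgt; apply/negP => neg.
set e := H r1 - H r2; have e0 : 0 < e by rewrite subr_lt0 in neg; rewrite subr_gt0.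
have eps_D0 : 0 <= D / eps by rewrite divr_ge0 // ltW.
have K_e0 : 0 <= `|K| * D ^+ 2 / e by rewrite divr_ge0 ?mulr_ge0 // ltW.
set n := (Num.Def.archi_bound (D / eps + `|K| * D ^+ 2 / e)).+1.
have nM : D / eps + `|K| * D ^+ 2 / e < n%:R.
  by apply: lt_le_trans (archi_boundP _) _; rewrite ?ler_nat ?addr_ge0.
have n0 : 0 < (n%:R : R) by rewrite ltr0n.
have small : D / n%:R <= eps by rewrite ler_pdivrMr // mulrC -ler_pdivrMr //; lra.
have := partition n isT small; rewrite -/e ler_pdivlMr // => le_en.
have : `|K| * D ^+ 2 / e < n%:R by lra.
rewrite ltr_pdivrMr // [n%:R * e]mulrC.
have : K * D ^+ 2 <= `|K| * D ^+ 2 by rewrite ler_wpM2r ?sqr_ge0 ?ler_norm.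
lra.
Qed.

Section Vanishing.
Context {R : realType} {nu : R -> R} {a1 : R}.
Hypothesis nu_ge0 : forall r, 0 < r -> 0 <= nu r.
Hypothesis nu_nonincr : forall r s, 0 < r -> r <= s -> nu s <= nu r.
Hypothesis nu_shift : forall r, 1 <= r -> nu r <= a1 * nu (r + 1).
Hypothesis nu_double : forall r, 0 < r -> r <= 1 -> nu r <= a1 * nu (2 * r).

Lemma nu_eq0_of_le0 r : 0 < r -> nu r <= 0 -> nu r = 0.
Proof. by move=> r0 le0; apply/le_anti; rewrite le0 nu_ge0. Qed.

Lemma vanish_from_shift (s : R) : 1 <= s ->
  (forall t, s + 1 <= t -> nu t = 0) -> forall t, s <= t -> nu t = 0.
Proof.
move=> s1 Z t st; apply: nu_eq0_of_le0; first lra.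
by have := nu_shift t (le_trans s1 st); rewrite (Z (t + 1)) ?mulr0 // lerD2r.
Qed.

Lemma vanish_from_half (s : R) : 0 < s -> (forall t, 1 <= t -> nu t = 0) ->
  (forall t, 2 * s <= t -> nu t = 0) -> forall t, s <= t -> nu t = 0.
Proof.
move=> s0 Z1 Z2s t st; have [t1|/ltW t1] := leP t 1; last exact: Z1.
apply: nu_eq0_of_le0; first lra.
by have := nu_double t (lt_le_trans s0 st) t1; rewrite (Z2s (2 * t)) ?mulr0 //; lra.
Qed.

Lemma nu_eq0_of_eq0 (r0 : R) : 0 < r0 -> nu r0 = 0 -> forall t, 0 < t -> nu t = 0.
Proof.
move=> r00 nu_r0 t t0.
have Zr0 s : r0 <= s -> nu s = 0.
  by move=> r0s; apply: nu_eq0_of_le0; [lra | rewrite -nu_r0 nu_nonincr].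
have Z1 s : 1 <= s -> nu s = 0.
  have shift n : (forall s, 1 + n%:R <= s -> nu s = 0) -> forall s, 1 <= s -> nu s = 0.
    elim: n => [|n IH] Zn; first by move=> s' s1; apply: Zn; rewrite addr0.
    apply: IH; apply: vanish_from_shift => [|u]; first by rewrite lerDl.
    by rewrite -addrA natr1; exact: Zn.
  apply: (shift (Num.Def.archi_bound r0)) => s' s'n; apply: Zr0.
  by have := archi_boundP (ltW r00); lra.
have halve n : forall s, 0 < s -> (forall u, 2 ^+ n * s <= u -> nu u = 0) ->
    forall u, s <= u -> nu u = 0.
  elim: n => [|n IH] s s0 Zn; first by move=> u su; apply: Zn; rewrite expr0 mul1r.
  apply: vanish_from_half => //; apply: IH; first lra.
  by move=> u; rewrite mulrA -exprSr; exact: Zn.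
set n := Num.Def.archi_bound (1 / t).
have : 1 / t < 2 ^+ n.
  apply: lt_le_trans (archi_boundP _) _; first by rewrite divr_ge0 // ltW.
  by rewrite -natrX ler_nat ltnW // ltn_expl.
rewrite ltr_pdivrMr // => tn.
by apply: (halve n t) => // u tu; apply: Z1; lra.
Qed.
End Vanishing.

Section RadialDensity.
Context {R : realType} {nu nu' : R -> R}.
Implicit Types a b r s x : R.
Hypothesis nu_integral : forall r, 0 < r ->
  lebesgue_measure.-integrable (`[r, +oo[ : set R) (fun rho => (nu' rho)%:E) /\
  nu r = - fine (\int[lebesgue_measure]_(rho in (`[r, +oo[ : set R)) (nu' rho)%:E).
Hypothesis nu'_div_nonincr : forall r s, 0 < r -> r <= s -> - nu' s / s <= - nu' r / r.

Lemma nu_sub_integral a b : 0 < a -> a < b ->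
  lebesgue_measure.-integrable `[a, b] (fun x => (- nu' x)%:E) /\
  (nu a - nu b)%:E = (\int[lebesgue_measure]_(x in `[a, b]) (- nu' x)%:E)%E.
Proof.
move=> a0 ab; have b0 : 0 < b by apply: lt_trans ab.
have [Ia ea] := nu_integral _ a0; have [Ib eb] := nu_integral _ b0.
have sub_ab (b' : itv_bound R) : [set` Interval (BLeft a) b'] `<=` `[a, +oo[.
  by move=> x /=; rewrite !in_itv /=; case: b' => [[] ?|[]] /= /andP[-> _].
have restrict (b' : itv_bound R) := @integrableS _ _ _ (@lebesgue_measure R) _ _ _
  (measurable_itv _) (measurable_itv _) (sub_ab b') Ia.
have Iab := restrict (BRight b); have Iab' := restrict (BLeft b).
have -> : (fun x => (- nu' x)%:E) = (fun x => (-1)%:E * (nu' x)%:E)%E.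
  by apply/funext => x; rewrite -EFinM mulN1r.
split; first exact: integrableZl.
rewrite integralZl //.
have split_ab : `[a, +oo[%classic = `[a, b[%classic `|` `[b, +oo[%classic.
  by apply: itv_bndbnd_setU; rewrite bnd_simp // ltW.
have disj_ab : [disjoint `[a, b[%classic & `[b, +oo[%classic].
  apply/disj_setPS => x [] /=; rewrite !in_itv /= andbT => /andP[_ xb] bx.
  by move: (lt_le_trans xb bx); rewrite ltxx.
move: ea (Ia); rewrite split_ab => ea /integrableP[mIa _].
rewrite integral_setU // in ea.
rewrite integral_itv_bndo_bndc in ea; last by case/integrableP: Iab'.
rewrite fineD ?(integrable_fin_num _ Iab) ?(integrable_fin_num _ Ib) // in ea.
rewrite ea eb opprD opprK subrK mulN1e EFinN fineK //.
exact: integrable_fin_num Iab.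
Qed.

Lemma nu'_le0 r : 0 < r -> nu' r <= 0.
Proof.
move=> r0; rewrite leNgt; apply/negP => nu'r0.
have nu'_ge s : r <= s -> nu' r <= nu' s.
  move=> rs; have s0 : 0 < s by apply: lt_le_trans rs.
  have := nu'_div_nonincr _ _ r0 rs; rewrite !mulNr lerN2 => qrs.
  have qr0 : 0 < nu' r / r by rewrite divr_gt0.
  rewrite -(divfK (lt0r_neq0 r0) (nu' r)) -(divfK (lt0r_neq0 s0) (nu' s)).
  by move: qrs qr0; set qr := nu' r / r; set qs := nu' s / s; nra.
have /integrableP[_] := (nu_integral _ r0).1; apply/negP; rewrite -leNgt leye_eq.
have : (\int[lebesgue_measure]_(x in `[r, +oo[) (nu' r)%:E <=
        \int[lebesgue_measure]_(x in `[r, +oo[) `|(nu' x)%:E|)%E.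
  apply: ge0_le_integral => //.
  - by move=> x _; rewrite lee_fin ltW.
  - by case/integrableP: (integrable_abse (nu_integral _ r0).1).
  - move=> x /=; rewrite in_itv /= andbT => rx.
    by rewrite lee_fin (le_trans (nu'_ge _ rx)) // ler_norm.
by rewrite integral_cst //= lebesgue_measure_itv /= ltry addye // gt0_muley ?lte_fin.
Qed.


Lemma nu_sub_ge a b : 0 < a -> a < b ->
  - nu' b / b * (b ^+ 2 - a ^+ 2) / 2 <= nu a - nu b.
Proof.
move=> a0 ab; have [Iab sub_ab] := nu_sub_integral _ _ a0 ab.
rewrite -lee_fin sub_ab -integral_itv_scale_id //.
apply: le_integral_itv => //; first exact: integrable_itv_linear.
move=> x /andP[ax xb]; have x0 : 0 < x by apply: lt_le_trans ax.
by have := nu'_div_nonincr _ _ x0 xb; rewrite ler_pdivlMr.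
Qed.

Lemma nu_sub_le a b : 0 < a -> a < b ->
  nu a - nu b <= - nu' a / a * (b ^+ 2 - a ^+ 2) / 2.
Proof.
move=> a0 ab; have [Iab sub_ab] := nu_sub_integral _ _ a0 ab.
rewrite -lee_fin sub_ab -integral_itv_scale_id //.
apply: le_integral_itv => //; first exact: integrable_itv_linear.
move=> x /andP[ax xb]; have x0 : 0 < x by apply: lt_le_trans ax.
by have := nu'_div_nonincr _ _ a0 ax; rewrite ler_pdivrMr.
Qed.

Lemma nu_sub_le_sup a b C : 0 < a -> a < b ->
  (forall x, a <= x <= b -> - nu' x <= C) -> nu a - nu b <= C * (b - a).
Proof.
move=> a0 ab nu'_le; have [Iab sub_ab] := nu_sub_integral _ _ a0 ab.
rewrite -lee_fin sub_ab -integral_itv_cst //.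
apply: le_integral_itv => //; apply: integrable_itv_continuous; exact: cst_continuous.
Qed.

Context {a1 : R}.
Hypothesis nu_nonincr : forall r s, 0 < r -> r <= s -> nu s <= nu r.
Hypothesis nu_shift : forall r, 1 <= r -> nu r <= a1 * nu (r + 1).
Hypothesis nu_double : forall r, 0 < r -> r <= 1 -> nu r <= a1 * nu (2 * r).

Local Notation c := (3 * (a1 - 1)).

Lemma nu'_mul_min_le r : 0 < r -> - nu' r * Num.min r 1 <= c * nu r.
Proof.
move=> r0; set q := - nu' r / r.
have q0 : 0 <= q by rewrite divr_ge0 ?oppr_ge0 ?nu'_le0 // ltW.
have -> : - nu' r = q * r by rewrite divfK ?lt0r_neq0.
have qr0 : 0 <= q * r by rewrite mulr_ge0 // ltW.
have [r2|r2] := leP r 2.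
  have := nu_sub_ge (r / 2) r; rewrite -/q => /(_ ltac:(lra) ltac:(lra)).
  have := nu_double (r / 2) ltac:(lra) ltac:(lra); rewrite mulrCA divff ?mulr1 //.
  have -> : q * (r ^+ 2 - (r / 2) ^+ 2) / 2 = 3 / 8 * (q * r * r) by field.
  by have [r1|/ltW r1] := leP r 1; nra.
have := nu_sub_ge (r - 1) r; rewrite -/q => /(_ ltac:(lra) ltac:(lra)).
have := nu_shift (r - 1); rewrite subrK => /(_ ltac:(lra)).
have -> : q * (r ^+ 2 - (r - 1) ^+ 2) / 2 = q * r - q / 2 by field.
by rewrite min_r; nra.
Qed.

Hypothesis nu_gt0 : forall r, 0 < r -> 0 < nu r.

Lemma a1_ge1 : 1 <= a1.
Proof.
have := nu_double 1 ltr01 (lexx 1); rewrite mulr1.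
have := nu_nonincr 1 2 ltr01 ltac:(lra); have := nu_gt0 2 ltac:(lra); nra.
Qed.

Lemma abs_nu'_div_nu_le r : 0 < r -> `|nu' r / nu r| <= c / Num.min r 1.
Proof.
move=> r0; have min0 : 0 < Num.min r 1 by rewrite lt_min r0 ltr01.
rewrite ler0_norm; last by rewrite mulr_le0_ge0 ?nu'_le0 // invr_ge0 ltW // nu_gt0.
by rewrite -mulNr ler_pdivrMr ?nu_gt0 // mulrAC ler_pdivlMr // nu'_mul_min_le.
Qed.

Lemma nu'_le_right a x : 0 < a -> a <= x -> - nu' x <= c * (a^-1 + 1) * nu a.
Proof.
move=> a0 ax; have x0 : 0 < x by apply: lt_le_trans ax.
have c0 : 0 <= c by have := a1_ge1; lra.
have min0 : 0 < Num.min x 1 by rewrite lt_min x0 ltr01.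
have inv_min : (Num.min x 1)^-1 <= a^-1 + 1.
  have [x1|x1] := leP x 1; last by rewrite invr1 lerDr invr_ge0 ltW.
  by rewrite (@le_trans _ _ a^-1) ?lerDl // lef_pV2 ?posrE.
have := le_trans (nu'_mul_min_le _ x0) (ler_wpM2l c0 (nu_nonincr _ _ a0 ax)).
rewrite -ler_pdivlMr // => /le_trans; apply.
by rewrite mulrAC ler_wpM2r ?ler_wpM2l // ltW // nu_gt0.
Qed.

Lemma ln_nu_quadratic_drop r1 a b : 0 < r1 -> r1 <= a -> a < b ->
  c * (r1^-1 + 1) * (b - a) <= 1 / 2 ->
  (ln (nu a) + c * ln a + c * a) - (ln (nu b) + c * ln b + c * b) <=
  (c / r1 ^+ 2 + 2 * (c * (r1^-1 + 1)) ^+ 2) * (b - a) ^+ 2.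
Proof.
move=> r10 r1a ab small; have a0 : 0 < a by apply: lt_le_trans r1a.
have b0 : 0 < b by apply: lt_trans ab.
have c0 : 0 <= c by have := a1_ge1; lra.
set d := c * (a^-1 + 1) * (b - a).
have ainv1 : 0 <= a^-1 + 1 by rewrite addr_ge0 // invr_ge0 ltW.
have d0 : 0 <= d by apply: mulr_ge0; [exact: mulr_ge0 | rewrite subr_ge0 ltW].
have d_le : d <= c * (r1^-1 + 1) * (b - a).
  apply: ler_wpM2r; first by rewrite subr_ge0 ltW.
  by apply: ler_wpM2l => //; rewrite lerD2r lef_pV2 ?posrE.
have drop : nu a - nu b <= d * nu a.
  rewrite /d mulrAC; apply: nu_sub_le_sup => // x /andP[ax _].
  exact: nu'_le_right.
have ln_nu : ln (nu a) - ln (nu b) <= d + 2 * d ^+ 2.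
  by apply: ln_sub_le_of_relative_drop; rewrite ?nu_gt0 // d0 (le_trans d_le).
have ln_ab : ln a - ln b <= a / b - 1.
  rewrite -ln_div ?posrE //; have := @le_ln1Dx _ (a / b - 1); rewrite subrKC.
  by apply; have : 0 < a / b := divr_gt0 a0 b0; lra.
have -> : (ln (nu a) + c * ln a + c * a) - (ln (nu b) + c * ln b + c * b) =
    (ln (nu a) - ln (nu b)) + c * (ln a - ln b) + c * (a - b) by ring.
have ab_sq : d + c * (a / b - 1) + c * (a - b) <= c / r1 ^+ 2 * (b - a) ^+ 2.
  have -> : d + c * (a / b - 1) + c * (a - b) = c * (b - a) ^+ 2 / (a * b).
    by rewrite /d; field; rewrite !lt0r_neq0.
  rewrite mulrAC ler_wpM2r ?sqr_ge0 // ler_wpM2l // lef_pV2 ?posrE ?exprn_gt0 ?mulr_gt0 //.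
  by rewrite expr2; nra.
have d_sq : d ^+ 2 <= (c * (r1^-1 + 1)) ^+ 2 * (b - a) ^+ 2.
  by rewrite -exprMn lerXn2r ?nnegrE // (le_trans d0).
have := ler_wpM2l c0 ln_ab; clearbody d; lra.
Qed.

Lemma nu_ratio_le r1 r2 : 0 < r1 -> r1 < r2 ->
  nu r1 / nu r2 <= (r2 / r1) `^ c * expR (c * (r2 - r1)).
Proof.
move=> r10 r12; have r20 : 0 < r2 by apply: lt_trans r12.
have c0 : 0 <= c by have := a1_ge1; lra.
set C := c * (r1^-1 + 1).
have C0 : 0 <= C by rewrite mulr_ge0 // addr_ge0 // invr_ge0 ltW.
have H12 : ln (nu r1) + c * ln r1 + c * r1 <= ln (nu r2) + c * ln r2 + c * r2.
  apply: (@le_of_quadratic_drop _ (fun x => ln (nu x) + c * ln x + c * x)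
    (c / r1 ^+ 2 + 2 * C ^+ 2) _ _ (2 * C + 2)^-1).
  - exact: r12.
  - by rewrite invr_gt0; lra.
  move=> a b r1a ab ba_eps; apply: ln_nu_quadratic_drop => //.
  rewrite -/C; clearbody C.
  have : (b - a) * (2 * C + 2) <= 1 by rewrite -ler_pdivlMr ?div1r //; lra.
  nra.
have q0 : 0 < r2 / r1 by rewrite divr_gt0.
rewrite -ler_ln ?posrE ?divr_gt0 ?mulr_gt0 ?powR_gt0 ?expR_gt0 ?nu_gt0 //.
rewrite ln_div ?posrE ?nu_gt0 // lnM ?posrE ?powR_gt0 ?expR_gt0 // ln_powR expRK.
by rewrite ln_div ?posrE //; lra.
Qed.

Lemma nu_sub_le_linear r1 r2 : 0 < r1 -> r1 < r2 ->
  nu r1 - nu r2 <= 3 / 2 * (a1 - 1) * (nu r1 / Num.min 1 r1) * (r2 - r1) * (1 + r2 / r1).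
Proof.
move=> r10 r12; have m0 : 0 < Num.min 1 r1 by rewrite lt_min r10 ltr01.
have nu'_le : - nu' r1 <= c * (nu r1 / Num.min 1 r1).
  by rewrite mulrA ler_pdivlMr // minC nu'_mul_min_le.
apply: le_trans (nu_sub_le _ _ r10 r12) _.
have -> : - nu' r1 / r1 * (r2 ^+ 2 - r1 ^+ 2) / 2 =
    - nu' r1 * ((r2 - r1) * (1 + r2 / r1) / 2) by field; rewrite lt0r_neq0.
have -> : 3 / 2 * (a1 - 1) * (nu r1 / Num.min 1 r1) * (r2 - r1) * (1 + r2 / r1) =
    c * (nu r1 / Num.min 1 r1) * ((r2 - r1) * (1 + r2 / r1) / 2) by ring.
have r21 : 0 <= 1 + r2 / r1 by rewrite addr_ge0 // divr_ge0 // ltW // (lt_trans r10).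
by apply: ler_wpM2r nu'_le; rewrite divr_ge0 // mulr_ge0 // subr_ge0 ltW.
Qed.

End RadialDensity.

Lemma infinite_levy_radial_density_gt0 {R : realType} {d : nat} {nu nu' : R -> R} {a1 : R} :
  infinite_levy_radial_density d nu -> H1 nu nu' a1 -> forall r, 0 < r -> 0 < nu r.
Proof.
move=> [_ nu_ge0 _ _ nu_inf] [nonincr _ _ shift double] r r0.
rewrite lt_neqAle nu_ge0 // andbT eq_sym; apply/negP => /eqP nu_r0.
move: nu_inf; rewrite (eq_integral (fun=> 0%E)) ?integral0 // => x.
rewrite inE /= in_itv /= andbT => x0.
by rewrite (nu_eq0_of_eq0 nu_ge0 nonincr shift double r r0 nu_r0) // mul0r.
Qed.

Theorem lemma5p1 (R : realType) (d : nat) (nu nu' : R -> R) (a1 : R) :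
  infinite_levy_radial_density d nu ->
  H1 nu nu' a1 ->
  [/\ (forall r, 0 < r ->
         `| nu' r / nu r | <= 3 * (a1 - 1) / Num.min r 1),
      (forall r1 r2, 0 < r1 -> r1 < r2 ->
         nu r1 / nu r2 <= (r2 / r1) `^ (3 * (a1 - 1)) * expR (3 * (a1 - 1) * (r2 - r1))) &
      (forall r1 r2, 0 < r1 -> r1 < r2 ->
         nu r1 - nu r2 <= 3 / 2 * (a1 - 1) * (nu r1 / Num.min 1 r1) * (r2 - r1) * (1 + r2 / r1))].
Proof.
move=> dens H; have nu_gt0 := infinite_levy_radial_density_gt0 dens H.
case: H => nonincr integral mono shift double.
split.
- exact: (abs_nu'_div_nu_le integral mono shift double nu_gt0).
- exact: (nu_ratio_le integral mono nonincr shift double nu_gt0).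
- exact: (nu_sub_le_linear integral mono shift double).
Qed.
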